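(* Let $C\subseteq V(K_n\times K_m)$ satisfy: (1) there exist $1\le n_1<n_2<n_3\le n$ and $1\le m_1<m_2<m_3\le m$ with $(n_1,m_1),(n_2,m_2),(n_3,m_3)\in C$; (2) every $v\in C$ is row-isolated or column-isolated in $C$; (3) $rs(C)=m-1$ and $cs(C)=n$; (4) at most one vertex of $C$ is isolated in $C$; (5) for every row $R_r$ such that every $v\in C\cap R_r$ is column-isolated but not row-isolated in $C$, we have $|C\cap R_r|\ge 3$. Then $C$ is an identifying code of $K_n\times K_m$.
   Context: $K_n\times K_m$ is the direct product of complete graphs: vertex set $[n]\times[m]$, with $(i,r)$ adjacent to $(j,s)$ iff $i\ne j$ and $r \ne s$. An identifying code is a dominating set $C$ with $N[x]\cap C\ne N[y]\cap C$ for all distinct vertices $x,y$ ($N[x]$ the closed neighborhood). Columns: $C_i=\{(i,t):t\in[m]\}$; rows: $R_r=\{(k,r):k\in[n]\}$. $cs(C)$ (resp. $rs(C)$) is the number of columns (resp. rows) meeting $C$. A vertex $v=(i,r)$ is column-isolated in $C$ if $C\cap C_i=\{v\}$, row-isolated in $C$ if $C\cap R_r=\{v\}$, and isolated in $C$ if both. *)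

From mathcomp Require Import all_boot.
Set Implicit Arguments. Unset Strict Implicit. Unset Printing Implicit Defensive.

(* Vertices of K_n x K_m: pairs (i, r) with i : 'I_n (column index), r : 'I_m (row index). *)
Definition vtx (n m : nat) := ('I_n * 'I_m)%type.

Definition adj n m (x y : vtx n m) : bool := (x.1 != y.1) && (x.2 != y.2).

Definition cnbhd n m (x : vtx n m) : {set vtx n m} := [set y | (y == x) || adj x y].

Definition dominating n m (C : {set vtx n m}) : Prop :=
  forall x : vtx n m, cnbhd x :&: C != set0.

Definition identifying_code n m (C : {set vtx n m}) : Prop :=
  dominating C /\
  forall x y : vtx n m, x != y -> cnbhd x :&: C != cnbhd y :&: C.

Definition column n m (i : 'I_n) : {set vtx n m} := [set v | v.1 == i].
Definition row n m (r : 'I_m) : {set vtx n m} := [set v | v.2 == r].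

Definition cs n m (C : {set vtx n m}) : nat := #|[set i : 'I_n | column m i :&: C != set0]|.
Definition rs n m (C : {set vtx n m}) : nat := #|[set r : 'I_m | row n r :&: C != set0]|.

Definition col_isolated n m (C : {set vtx n m}) (v : vtx n m) : bool :=
  C :&: column m v.1 == [set v].
Definition row_isolated n m (C : {set vtx n m}) (v : vtx n m) : bool :=
  C :&: row n v.2 == [set v].
Definition isolated n m (C : {set vtx n m}) (v : vtx n m) : bool :=
  col_isolated C v && row_isolated C v.

(* Domination: a vertex of C fails to dominate (p, q) only if it lies in
   column p or row q; three vertices of C on a "diagonal" (pairwise distinct
   columns and rows) cannot all do so.

   Separation: let x = (i, r) and y = (j, s) be distinct vertices whose
   neighbourhoods have the same trace on C.  The basic observation
   ([trace_column], [trace_row]) is that, when x and y lie in different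
   columns, every vertex of C in column i lies in row r or row s, and dually
   for rows.  Three cases follow, according to how many of x, y lie in C:
   - neither: two rows miss C, or a column misses C, or the two "corners"
     (i, s), (j, r) are both isolated in C, contradicting (3) or (4);
   - exactly x: row r meets C only in x and (j, r), both column- but not
     row-isolated, contradicting (5);
   - both: x and y are both isolated, contradicting (4).
   Condition (2) enters through [no_L_shape]: no vertex of C has another
   vertex of C both in its row and in its column. *)

From mathcomp Require Import all_boot zify.
Set Implicit Arguments. Unset Strict Implicit. Unset Printing Implicit Defensive.

Section Isolation.
Variables n m : nat.
Variable C : {set vtx n m}.

Lemma col_isolatedP (i : 'I_n) (r : 'I_m) : (i, r) \in C ->
  reflect (forall t, (i, t) \in C -> t = r) (col_isolated C (i, r)).
Proof.
move=> Cir; apply: (iffP eqP) => [/setP E t Cit | col_i].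
  by move: (E (i, t)); rewrite !inE Cit xpair_eqE eqxx => /esym/eqP.
apply/setP => -[k t]; rewrite !inE xpair_eqE /=.
case: (eqVneq k i) => [-> | _] /=; rewrite ?andbF ?andbT //.
by apply/idP/eqP => [/col_i | ->].
Qed.

Lemma row_isolatedP (i : 'I_n) (r : 'I_m) : (i, r) \in C ->
  reflect (forall k, (k, r) \in C -> k = i) (row_isolated C (i, r)).
Proof.
move=> Cir; apply: (iffP eqP) => [/setP E k Ckr | row_r].
  by move: (E (k, r)); rewrite !inE Ckr xpair_eqE !eqxx /= andbT => /esym/eqP.
apply/setP => -[k t]; rewrite !inE xpair_eqE /=.
case: (eqVneq t r) => [-> | _] /=; rewrite ?andbF ?andbT //.
by apply/idP/eqP => [/row_r | ->].
Qed.

Lemma isolated_of_lines (i : 'I_n) (r : 'I_m) : (i, r) \in C ->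
  (forall t, (i, t) \in C -> t = r) -> (forall k, (k, r) \in C -> k = i) ->
  isolated C (i, r).
Proof.
by move=> Cir col_i row_r; apply/andP; split;
  [apply/col_isolatedP | apply/row_isolatedP].
Qed.

Lemma row_shared (i k : 'I_n) (r : 'I_m) :
  (i, r) \in C -> (k, r) \in C -> k != i -> ~~ row_isolated C (i, r).
Proof.
by move=> Cir Ckr ki; apply/negP => /(row_isolatedP Cir) /(_ k Ckr) /eqP; apply/negP.
Qed.

Lemma no_L_shape (i j : 'I_n) (r s : 'I_m) :
  (forall v, v \in C -> row_isolated C v || col_isolated C v) ->
  (i, r) \in C -> (j, r) \in C -> (i, s) \in C -> i != j -> r != s -> False.
Proof.
move=> iso_C Cir Cjr Cis ij rs; case/orP: (iso_C _ Cir).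
  by move/row_isolatedP => /(_ Cir _ Cjr) ji; rewrite ji eqxx in ij.
by move/col_isolatedP => /(_ Cir _ Cis) sr; rewrite sr eqxx in rs.
Qed.

End Isolation.

Section Counting.
Variables n m : nat.
Variable C : {set vtx n m}.

Lemma column_meets : cs C = n -> forall i : 'I_n, exists t, (i, t) \in C.
Proof.
move=> Hcs i.
have: [set i0 : 'I_n | column m i0 :&: C != set0] = setT.
  apply/eqP; rewrite eqEcard subsetT cardsT card_ord.
  by rewrite -/(cs C) Hcs leqnn.
move/setP/(_ i); rewrite !inE => /set0Pn [[k t]].
by rewrite !inE /= => /andP [/eqP -> Cit]; exists t.
Qed.

Lemma missing_rows_eq : rs C = (m - 1)%N -> forall r s : 'I_m,
  (forall k, (k, r) \notin C) -> (forall k, (k, s) \notin C) -> r = s.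
Proof.
move=> Hrs r s miss_r miss_s; apply/eqP/contraT => rs_neq.
have: [set r0 : 'I_m | row n r0 :&: C != set0] \subset ~: [set r; s].
  apply/subsetP => r0; rewrite !inE => /set0Pn [[k t]].
  rewrite !inE /= => /andP [/eqP -> Ckt].
  apply/negP => /orP [] /eqP et; rewrite et in Ckt.
    by rewrite (negbTE (miss_r k)) in Ckt.
  by rewrite (negbTE (miss_s k)) in Ckt.
move/subset_leq_card; rewrite [#|~: _|]cardsCs setCK cards2 rs_neq card_ord.
move: Hrs; rewrite /rs => ->.
have /eqP : (r : nat) != s := rs_neq.
by have := ltn_ord r; have := ltn_ord s; lia.
Qed.

Lemma isolated_eq : (#|[set v in C | isolated C v]| <= 1)%N ->
  forall u w, u \in C -> w \in C -> isolated C u -> isolated C w -> u = w.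
Proof.
by move=> /card_le1_eqP one_iso u w Cu Cw Iu Iw; apply: one_iso; rewrite inE ?Cu ?Cw.
Qed.

End Counting.

Lemma diagonal_dominating n m (C : {set vtx n m}) (a b c : vtx n m) :
  [/\ a \in C, b \in C & c \in C] ->
  [/\ (a.1 < b.1)%N, (b.1 < c.1)%N, (a.2 < b.2)%N & (b.2 < c.2)%N] ->
  dominating C.
Proof.
move=> [Ca Cb Cc] [ab1 bc1 ab2 bc2] [p q]; apply/set0Pn.
have line (z : vtx n m) : z \notin cnbhd (p, q) -> (z.1 : nat) = p \/ (z.2 : nat) = q.
  rewrite inE /adj /= negb_or negb_and !negbK => /andP [_ /orP [] /eqP ->];
  by [left | right].
have [Na | /line a_pq] := boolP (a \in cnbhd (p, q)); first by exists a; rewrite in_setI Na.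
have [Nb | /line b_pq] := boolP (b \in cnbhd (p, q)); first by exists b; rewrite in_setI Nb.
have [Nc | /line c_pq] := boolP (c \in cnbhd (p, q)); first by exists c; rewrite in_setI Nc.
exfalso; lia.
Qed.

Section Separation.
Variables n m : nat.
Variable C : {set vtx n m}.

Definition same_trace (x y : vtx n m) : Prop :=
  forall z, z \in C -> (z \in cnbhd x) = (z \in cnbhd y).

Lemma same_traceE (x y : vtx n m) :
  cnbhd x :&: C = cnbhd y :&: C -> same_trace x y.
Proof. by move=> /setP E z Cz; move: (E z); rewrite !in_setI Cz !andbT. Qed.

Lemma same_trace_sym (x y : vtx n m) : same_trace x y -> same_trace y x.
Proof. by move=> T z Cz; rewrite T. Qed.

Lemma trace_adj (x y z : vtx n m) : same_trace x y ->
  z \in C -> z != x -> z != y -> adj x z = adj y z.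
Proof. by move=> T Cz zx zy; move: (T z Cz); rewrite !inE (negbTE zx) (negbTE zy). Qed.

Lemma trace_adj_self (x y : vtx n m) : same_trace x y -> x \in C -> x != y -> adj y x.
Proof. by move=> T Cx xy; move: (T x Cx); rewrite !inE eqxx (negbTE xy) => /esym. Qed.

Lemma trace_column (i j : 'I_n) (r s t : 'I_m) : same_trace (i, r) (j, s) ->
  i != j -> (i, t) \in C -> t = r \/ t = s.
Proof.
move=> T ij Cit; case: (eqVneq t r) => [|tr]; [by left | right].
have := trace_adj T Cit.
rewrite !xpair_eqE eqxx (negbTE tr) (negbTE ij) /adj /= eqxx.
rewrite [j == i]eq_sym (negbTE ij) /=.
by move=> /(_ isT isT) /esym /negbFE /eqP ->.
Qed.

Lemma trace_row (i j k : 'I_n) (r s : 'I_m) : same_trace (i, r) (j, s) ->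
  r != s -> (k, r) \in C -> k = i \/ k = j.
Proof.
move=> T rs Ckr; case: (eqVneq k i) => [|ki]; [by left | right].
have := trace_adj T Ckr.
rewrite !xpair_eqE eqxx (negbTE ki) (negbTE rs) /adj /= eqxx.
rewrite [s == r]eq_sym (negbTE rs) /= !andbF andbT /=.
by move=> /(_ isT isT) /esym /negbFE /eqP ->.
Qed.

Lemma outside_column_row_misses (i : 'I_n) (r s : 'I_m) :
  same_trace (i, r) (i, s) -> (i, r) \notin C -> r != s -> forall k, (k, r) \notin C.
Proof.
by move=> T Cir rs k; apply/negP => Ckr; case: (trace_row T rs Ckr) => ki;
  rewrite -ki Ckr in Cir.
Qed.

Lemma outside_row_column_misses (i j : 'I_n) (r : 'I_m) :
  same_trace (i, r) (j, r) -> (i, r) \notin C -> i != j -> forall t, (i, t) \notin C.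
Proof.
by move=> T Cir ij t; apply/negP => Cit; case: (trace_column T ij Cit) => tr;
  rewrite -tr Cit in Cir.
Qed.

Lemma outside_corner_isolated (i j : 'I_n) (r s t : 'I_m) :
  same_trace (i, r) (j, s) -> (i, r) \notin C -> (j, s) \notin C ->
  i != j -> r != s -> (i, t) \in C -> (i, s) \in C /\ isolated C (i, s).
Proof.
move=> T Cir Cjs ij rs Cit.
have col_i u : (i, u) \in C -> u = s.
  by move=> Ciu; case: (trace_column T ij Ciu) => // ur; rewrite -ur Ciu in Cir.
have Cis : (i, s) \in C by rewrite -(col_i t Cit).
split => //; apply: (isolated_of_lines Cis col_i) => k Cks.
have sr : s != r by rewrite eq_sym.
by case: (trace_row (same_trace_sym T) sr Cks) => // kj; rewrite -kj Cks in Cjs.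
Qed.

Lemma outside_pair_separated (i j : 'I_n) (r s : 'I_m) :
  cs C = n -> rs C = (m - 1)%N -> (#|[set v in C | isolated C v]| <= 1)%N ->
  (i, r) \notin C -> (j, s) \notin C -> (i, r) != (j, s) ->
  ~ same_trace (i, r) (j, s).
Proof.
move=> Hcs Hrs H4 Cir Cjs xy T.
have [i_j | ij] := eqVneq i j.
  subst j; have rs : r != s by apply: contraNneq xy => ->.
  have sr : s != r by rewrite eq_sym.
  move: (missing_rows_eq Hrs (outside_column_row_misses T Cir rs)
           (outside_column_row_misses (same_trace_sym T) Cjs sr)).
  by move/eqP; rewrite (negbTE rs).
have [r_s | rs] := eqVneq r s.
  subst s; have [t Cit] := column_meets Hcs i.
  by move: (outside_row_column_misses T Cir ij t); rewrite Cit.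
have ji : j != i by rewrite eq_sym.
have sr : s != r by rewrite eq_sym.
have [t Cit] := column_meets Hcs i; have [u Cju] := column_meets Hcs j.
have [Cis Iis] := outside_corner_isolated T Cir Cjs ij rs Cit.
have [Cjr Ijr] := outside_corner_isolated (same_trace_sym T) Cjs Cir ji sr Cju.
by move: (isolated_eq H4 Cis Cjr Iis Ijr) => [/eqP]; rewrite (negbTE ij).
Qed.

Hypothesis iso_C : forall v, v \in C -> row_isolated C v || col_isolated C v.

Lemma half_inside_pair_separated (i j : 'I_n) (r s : 'I_m) :
  cs C = n ->
  (forall r : 'I_m, row n r :&: C != set0 ->
     (forall v, v \in row n r :&: C -> col_isolated C v && ~~ row_isolated C v) ->
     (3 <= #|row n r :&: C|)%N) ->
  (i, r) \in C -> (j, s) \notin C -> ~ same_trace (i, r) (j, s).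
Proof.
move=> Hcs H5 Cir Cjs T.
have xy : (i, r) != (j, s) by apply: contraNneq Cjs => <-.
have /andP [ji sr] := trace_adj_self T Cir xy.
have ij : i != j by rewrite eq_sym.
have rs : r != s by rewrite eq_sym.
have col_j u : (j, u) \in C -> u = r.
  move=> Cju; case: (trace_column (same_trace_sym T) ji Cju) => // us.
  by rewrite -us Cju in Cjs.
have [t Cjt] := column_meets Hcs j.
have Cjr : (j, r) \in C by rewrite -(col_j t Cjt).
have Cis : (i, s) \notin C.
  by apply/negP => Cis; apply: (no_L_shape iso_C Cir Cjr Cis ij rs).
have col_i u : (i, u) \in C -> u = r.
  by move=> Ciu; case: (trace_column T ij Ciu) => // us; rewrite -us Ciu in Cis.
have row_rE : row n r :&: C = [set (i, r); (j, r)].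
  apply/setP => -[k u]; rewrite !inE /= !xpair_eqE.
  case: (eqVneq u r) => [-> | _]; rewrite ?andbF ?andbT //=.
  apply/idP/idP => [/(trace_row T rs) [] -> | /orP [] /eqP ->]; by rewrite ?eqxx ?orbT.
have : (3 <= #|row n r :&: C|)%N.
  apply: H5; first by apply/set0Pn; exists (i, r); rewrite row_rE set21.
  rewrite row_rE => v /set2P [] ->; apply/andP; split.
  - exact/(col_isolatedP Cir)/col_i.
  - exact: row_shared Cir Cjr ji.
  - exact/(col_isolatedP Cjr)/col_j.
  - exact: row_shared Cjr Cir ij.
by rewrite row_rE cards2 xpair_eqE (negbTE ij).
Qed.

Lemma inside_pair_isolated (i j : 'I_n) (r s : 'I_m) :
  (i, r) \in C -> (j, s) \in C -> (i, r) != (j, s) ->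
  same_trace (i, r) (j, s) -> isolated C (i, r).
Proof.
move=> Cir Cjs xy T.
have /andP [ji sr] := trace_adj_self T Cir xy.
have ij : i != j by rewrite eq_sym.
have rs : r != s by rewrite eq_sym.
have Cjr : (j, r) \notin C.
  by apply/negP => Cjr; apply: (no_L_shape iso_C Cjr Cir Cjs ji rs).
have Cis : (i, s) \notin C.
  by apply/negP => Cis; apply: (no_L_shape iso_C Cis Cjs Cir ij sr).
apply: (isolated_of_lines Cir) => [t Cit | k Ckr].
  by case: (trace_column T ij Cit) => // ts; rewrite -ts Cit in Cis.
by case: (trace_row T rs Ckr) => // kj; rewrite -kj Ckr in Cjr.
Qed.

End Separation.

Theorem mainTheorem13 (n m : nat) (C : {set vtx n m}) :
  (* (1) *)
  (exists a b c : vtx n m,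
      [/\ a \in C, b \in C & c \in C] /\
      [/\ (a.1 < b.1)%N, (b.1 < c.1)%N, (a.2 < b.2)%N & (b.2 < c.2)%N]) ->
  (* (2) *)
  (forall v, v \in C -> row_isolated C v || col_isolated C v) ->
  (* (3) *)
  rs C = (m - 1)%N -> cs C = n ->
  (* (4) *)
  (#|[set v in C | isolated C v]| <= 1)%N ->
  (* (5) rows meeting C all of whose C-vertices are column- but not row-isolated *)
  (forall r : 'I_m,
      row n r :&: C != set0 ->
      (forall v, v \in row n r :&: C -> col_isolated C v && ~~ row_isolated C v) ->
      (3 <= #|row n r :&: C|)%N) ->
  identifying_code C.
Proof.
move=> [a [b [c [Cabc diag]]]] iso_C Hrs Hcs H4 H5; split.
  exact: (diagonal_dominating Cabc diag).
move=> [i r] [j s] xy; apply/negP => /eqP /same_traceE T.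
have yx : (j, s) != (i, r) by rewrite eq_sym.
case/boolP: ((i, r) \in C) => Cir; case/boolP: ((j, s) \in C) => Cjs.
- have Iir := inside_pair_isolated iso_C Cir Cjs xy T.
  have Ijs := inside_pair_isolated iso_C Cjs Cir yx (same_trace_sym T).
  by move: xy; rewrite (isolated_eq H4 Cir Cjs Iir Ijs) eqxx.
- exact: (half_inside_pair_separated iso_C Hcs H5 Cir Cjs T).
- exact: (half_inside_pair_separated iso_C Hcs H5 Cjs Cir (same_trace_sym T)).
- exact: (outside_pair_separated Hcs Hrs H4 Cir Cjs xy T).
Qed.
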